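(* Let $A$ and $B$ be rings, $f: A\to B$ a ring homomorphism and $J$ a proper ideal of $B$. Let $S$ be the set of regular central elements of $B$ (central elements that are not zero divisors), and assume $J\cap S\neq\varnothing$. Then $A\bowtie^{f}J$ is a nil-Armendariz ring if and only if both $A$ and $f(A)+J$ are nil-Armendariz rings.
   Context: All rings are associative with identity (not necessarily commutative), ring homomorphisms are unital, and ideals are two-sided. $\mathrm{nil}(R)$ denotes the set of nilpotent elements of a ring $R$, and $\mathrm{nil}(R)[x]$ the set of polynomials all of whose coefficients lie in $\mathrm{nil}(R)$. For a ring homomorphism $f:A\to B$ and an ideal $J$ of $B$, the amalgamation is the subring $A\bowtie^{f}J=\{(a,f(a)+j)\mid a\in A,\ j\in J\}$ of $A\times B$; $f(A)+J=\{f(a)+j: a\in A, j\in J\}$ is a subring of $B$. A ring $R$ is nil-Armendariz if whenever $p(x)=\sum_{i=0}^n a_ix^i$ and $q(x)=\sum_{j=0}^m b_jx^j$ in $R[x]$ satisfy $p(x)q(x)\in\mathrm{nil}(R)[x]$, then $a_ib_j\in\mathrm{nil}(R)$ for all $i,j$. *)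

From HB Require Import structures.
From mathcomp Require Import all_boot all_order all_algebra.
From Stdlib Require Import ClassicalEpsilon.
Set Implicit Arguments. Unset Strict Implicit. Unset Printing Implicit Defensive.
Import GRing.Theory.
Local Open Scope ring_scope.

Definition nilpotent (R : nzRingType) (x : R) : Prop := exists n : nat, x ^+ n = 0.

(* nil-Armendariz rings: p q in R[x] with p*q in nil(R)[x] implies
   a_i b_j in nil(R) for all i j (coefficients beyond the degree are 0). *)
Definition nil_armendariz (R : nzRingType) : Prop :=
  forall p q : {poly R},
    (forall k : nat, nilpotent (p * q)`_k) ->
    forall i j : nat, nilpotent (p`_i * q`_j).

Record ideal (R : nzRingType) := Ideal {
  ideal_pred :> {pred R};
  ideal0 : 0 \in ideal_pred;
  idealB : forall x y, x \in ideal_pred -> y \in ideal_pred -> x - y \in ideal_pred;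
  idealMl : forall a x, x \in ideal_pred -> a * x \in ideal_pred;
  idealMr : forall a x, x \in ideal_pred -> x * a \in ideal_pred }.

Definition regular_central (R : nzRingType) (s : R) : Prop :=
  (forall b : R, s * b = b * s) /\
  (forall b : R, s * b = 0 -> b = 0) /\ (forall b : R, b * s = 0 -> b = 0).

Definition asbool (P : Prop) : bool :=
  if excluded_middle_informative P then true else false.

Lemma asboolP (P : Prop) : reflect P (asbool P).
Proof. by rewrite /asbool; case: excluded_middle_informative => h; constructor. Qed.

Section Amalgamation.
Variables (A B : nzRingType) (f : {rmorphism A -> B}) (J : ideal B).

(* A ⋈^f J = {(a, f a + j)} as a predicate on A * B *)
Definition amalg_pred : {pred A * B} := [pred x : A * B | x.2 - f x.1 \in J].

Lemma amalg_subring_closed : subring_closed amalg_pred.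
Proof.
have e : forall x y, x \in J -> y \in J -> x + y \in J.
  move=> x y hx hy; rewrite -[y]opprK; apply: idealB => //.
  by rewrite -[- y]sub0r; apply: idealB => //; exact: ideal0.
split.
- by rewrite inE /= rmorph1 subrr ideal0.
- move=> [a b] [a' b']; rewrite !inE /= => h h'.
  have -> : b - b' - f (a - a') = (b - f a) - (b' - f a').
    by rewrite rmorphB !opprB addrACA [RHS]addrACA [- f a + _]addrC.
  exact: idealB.
- move=> [a b] [a' b']; rewrite !inE /= => h h'.
  have -> : b * b' - f (a * a') = (b - f a) * b' + f a * (b' - f a').
    by rewrite rmorphM mulrBl mulrBr addrA subrK.
  by apply: e; [apply: idealMr | apply: idealMl].
Qed.

Record amalg := Amalg { amalg_val : A * B; amalg_valP : amalg_val \in amalg_pred }.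
HB.instance Definition _ := [isSub for amalg_val].
HB.instance Definition _ := [Choice of amalg by <:].
HB.instance Definition _ :=
  GRing.SubChoice_isSubNzRing.Build (A * B)%type amalg_pred amalg amalg_subring_closed.

Definition fAJ_pred : {pred B} := [pred b : B | asbool (exists a : A, b - f a \in J)].

Lemma fAJ_subring_closed : subring_closed fAJ_pred.
Proof.
have e : forall x y, x \in J -> y \in J -> x + y \in J.
  move=> x y hx hy; rewrite -[y]opprK; apply: idealB => //.
  by rewrite -[- y]sub0r; apply: idealB => //; exact: ideal0.
split.
- by rewrite inE; apply/asboolP; exists 1; rewrite rmorph1 subrr ideal0.
- move=> x y; rewrite !inE => /asboolP [a h] /asboolP [a' h'].
  apply/asboolP; exists (a - a').
  have -> : x - y - f (a - a') = (x - f a) - (y - f a').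
    by rewrite rmorphB !opprB addrACA [RHS]addrACA [- f a + _]addrC.
  exact: idealB.
- move=> x y; rewrite !inE => /asboolP [a h] /asboolP [a' h'].
  apply/asboolP; exists (a * a').
  have -> : x * y - f (a * a') = (x - f a) * y + f a * (y - f a').
    by rewrite rmorphM mulrBl mulrBr addrA subrK.
  by apply: e; [apply: idealMr | apply: idealMl].
Qed.

Record fAJ := FAJ { fAJ_val : B; fAJ_valP : fAJ_val \in fAJ_pred }.
HB.instance Definition _ := [isSub for fAJ_val].
HB.instance Definition _ := [Choice of fAJ by <:].
HB.instance Definition _ :=
  GRing.SubChoice_isSubNzRing.Build B fAJ_pred fAJ fAJ_subring_closed.

End Amalgamation.

Arguments amalg {A B} f J.
Arguments fAJ {A B} f J.

From Pilot Require Import Defs.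
From HB Require Import structures.
From mathcomp Require Import all_boot all_order all_algebra.
Import GRing.Theory.
Local Open Scope ring_scope.
Set Implicit Arguments. Unset Strict Implicit.

(* If both A and f(A) + J are nil-Armendariz, the two ring morphisms from
   A ⋈^f J onto A and onto f(A) + J transport a nil product p q, and
   (a, b) is nilpotent as soon as both a and b are.  Conversely A is a
   retract of A ⋈^f J through the diagonal a |-> (a, f a), and for a regular
   central s in J the map c |-> (0, s c) sends f(A) + J into A ⋈^f J; it is
   not a ring morphism, but (0, s c) (0, s c') = (0, s^2 c c') and
   multiplication by the regular central s^2 neither creates nor destroys
   nilpotence, which is all the nil-Armendariz property sees. *)

Lemma rmorph_nilpotent (R S : nzRingType) (g : {rmorphism R -> S}) (x : R) :
  nilpotent x -> nilpotent (g x).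
Proof. by case=> n xn0; exists n; rewrite -rmorphXn xn0 rmorph0. Qed.

Lemma nilpotent_inj (R S : nzRingType) (g : {rmorphism R -> S}) (x : R) :
  injective g -> nilpotent (g x) -> nilpotent x.
Proof. by move=> g_inj [n gxn0]; exists n; apply: g_inj; rewrite rmorphXn rmorph0. Qed.

Lemma nilpotent_pair (R S : nzRingType) (u : R * S) :
  nilpotent u.1 -> nilpotent u.2 -> nilpotent u.
Proof.
move=> [n u1n0] [m u2m0]; exists (n + m)%N.
have -> : u ^+ (n + m) = (u.1 ^+ (n + m), u.2 ^+ (n + m)).
  by case: u {u1n0 u2m0} => a b; elim: (n + m)%N => // k IH; rewrite !exprS IH.
by rewrite !exprD u1n0 u2m0 mul0r mulr0.
Qed.

Lemma coef_mul_map_nilpotent (R S : nzRingType) (g : {rmorphism R -> S})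
    (p q : {poly R}) :
  (forall k, nilpotent (p * q)`_k) ->
  forall k, nilpotent (map_poly g p * map_poly g q)`_k.
Proof. by move=> pq_nil k; rewrite -rmorphM coef_map; apply: rmorph_nilpotent. Qed.

Lemma nil_armendariz_of_rmorph (S R1 R2 : nzRingType)
    (g1 : {rmorphism S -> R1}) (g2 : {rmorphism S -> R2}) :
  (forall x, nilpotent (g1 x) -> nilpotent (g2 x) -> nilpotent x) ->
  nil_armendariz R1 -> nil_armendariz R2 -> nil_armendariz S.
Proof.
move=> nil_joint R1_nA R2_nA p q pq_nil i j.
apply: nil_joint; rewrite rmorphM -!coef_map.
- exact: R1_nA (coef_mul_map_nilpotent g1 pq_nil) i j.
- exact: R2_nA (coef_mul_map_nilpotent g2 pq_nil) i j.
Qed.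

(* [g] need not be a ring morphism: it suffices that products of its values
   factor through an additive [h] that preserves and reflects nilpotence. *)
Lemma nil_armendariz_transfer (R S : nzRingType) (g : R -> S)
    (h : {additive R -> S}) :
  g 0 = 0 -> (forall x y, g x * g y = h (x * y)) ->
  (forall x, nilpotent x -> nilpotent (h x)) ->
  (forall x, nilpotent (h x) -> nilpotent x) ->
  nil_armendariz S -> nil_armendariz R.
Proof.
move=> g0 gM h_nil nil_h S_nA p q pq_nil i j.
have coef_g (r : {poly R}) k : (map_poly g r)`_k = g r`_k by rewrite coef_map_id0.
apply: nil_h; rewrite -gM -coef_g -coef_g; apply: S_nA => k.
have -> : (map_poly g p * map_poly g q)`_k = h (p * q)`_k.
  by rewrite !coefM raddf_sum; apply: eq_bigr => l _; rewrite !coef_g gM.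
exact: h_nil.
Qed.

Lemma nil_armendariz_retract (R S : nzRingType) (i : {rmorphism R -> S})
    (r : {rmorphism S -> R}) :
  cancel i r -> nil_armendariz S -> nil_armendariz R.
Proof.
move=> iK; apply: (nil_armendariz_transfer (g := i) (h := i)).
- exact: rmorph0.
- by move=> x y; rewrite /= rmorphM.
- by move=> x /= /(rmorph_nilpotent i).
- by move=> x /= /(rmorph_nilpotent r); rewrite iK.
Qed.

Section RegularCentral.
Variable R : nzRingType.

Lemma regular_centralM (s t : R) :
  regular_central s -> regular_central t -> regular_central (s * t).
Proof.
move=> [sC [sl sr]] [tC [tl tr]]; split; [|split] => b.
- by rewrite -mulrA tC mulrA sC mulrA.
- by rewrite -mulrA => /sl /tl.
- by rewrite mulrA => /tr /sr.
Qed.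

Lemma regular_central_nilpotentM (s x : R) :
  regular_central s -> nilpotent (s * x) <-> nilpotent x.
Proof.
move=> [sC [sl _]]; have sxX n : (s * x) ^+ n = s ^+ n * x ^+ n.
  by apply: exprMn_comm; apply: sC.
have sX_lreg m y : s ^+ m * y = 0 -> y = 0.
  by elim: m y => [|m IH] y; rewrite ?mul1r // exprS -mulrA => /sl /IH.
split=> [[n sxn0] | [n xn0]]; exists n; last by rewrite sxX xn0 mulr0.
by apply: (sX_lreg n); rewrite -sxX.
Qed.

End RegularCentral.

Section Amalgamation.
Variables (A B : nzRingType) (f : {rmorphism A -> B}) (J : ideal B).

Definition amalg_fst : {rmorphism amalg f J -> A} := fst \o val.

Lemma amalg_snd_in (x : amalg f J) : (val x).2 \in fAJ_pred f J.
Proof. by rewrite inE; apply/asboolP; exists (val x).1; have := valP x. Qed.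

Definition amalg_snd (x : amalg f J) : fAJ f J := Sub (val x).2 (amalg_snd_in x).

Lemma amalg_snd_is_zmod_morphism : zmod_morphism amalg_snd.
Proof. by move=> x y; apply: val_inj; rewrite rmorphB !SubK rmorphB. Qed.

Lemma amalg_snd_is_monoid_morphism : monoid_morphism amalg_snd.
Proof.
split; first by apply: val_inj; rewrite rmorph1 SubK rmorph1.
by move=> x y; apply: val_inj; rewrite rmorphM !SubK rmorphM.
Qed.

HB.instance Definition _ := GRing.isZmodMorphism.Build (amalg f J) (fAJ f J)
  amalg_snd amalg_snd_is_zmod_morphism.
HB.instance Definition _ := GRing.isMonoidMorphism.Build (amalg f J) (fAJ f J)
  amalg_snd amalg_snd_is_monoid_morphism.

Lemma nilpotent_amalg (x : amalg f J) :
  nilpotent (amalg_fst x) -> nilpotent (amalg_snd x) -> nilpotent x.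
Proof.
move=> x1_nil /(rmorph_nilpotent (val : fAJ f J -> B)) x2_nil.
exact: nilpotent_inj val_inj (nilpotent_pair x1_nil x2_nil).
Qed.

Lemma amalg_diag_in (a : A) : (a, f a) \in amalg_pred f J.
Proof. by rewrite inE /= subrr ideal0. Qed.

Definition amalg_diag (a : A) : amalg f J := Sub (a, f a) (amalg_diag_in a).

Lemma amalg_diag_is_zmod_morphism : zmod_morphism amalg_diag.
Proof. by move=> a a'; apply: val_inj; rewrite rmorphB !SubK /= rmorphB. Qed.

Lemma amalg_diag_is_monoid_morphism : monoid_morphism amalg_diag.
Proof.
split; first by apply: val_inj; rewrite rmorph1 SubK /= rmorph1.
by move=> a a'; apply: val_inj; rewrite rmorphM !SubK /= rmorphM.
Qed.

HB.instance Definition _ := GRing.isZmodMorphism.Build A (amalg f J)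
  amalg_diag amalg_diag_is_zmod_morphism.
HB.instance Definition _ := GRing.isMonoidMorphism.Build A (amalg f J)
  amalg_diag amalg_diag_is_monoid_morphism.

Lemma amalg_diagK : cancel amalg_diag amalg_fst.
Proof. by []. Qed.

Section Scale.
Variables (t : B) (tJ : t \in J).

Lemma amalg_scale_in (c : fAJ f J) : (0, t * val c) \in amalg_pred f J.
Proof. by rewrite inE /= rmorph0 subr0; apply: Defs.idealMr. Qed.

Definition amalg_scale (c : fAJ f J) : amalg f J := Sub (0, t * val c) (amalg_scale_in c).

Lemma amalg_scale_is_zmod_morphism : zmod_morphism amalg_scale.
Proof.
move=> c c'; apply: val_inj => /=; rewrite mulrBr.
by apply: injective_projections; rewrite /= ?subr0.
Qed.

HB.instance Definition _ := GRing.isZmodMorphism.Build (fAJ f J) (amalg f J)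
  amalg_scale amalg_scale_is_zmod_morphism.

Lemma amalg_scale_nilpotent (c : fAJ f J) :
  regular_central t -> nilpotent (amalg_scale c) <-> nilpotent c.
Proof.
move=> t_reg; split=> [scale_nil | c_nil].
  apply: (nilpotent_inj val_inj); apply/(regular_central_nilpotentM (val c) t_reg).
  by move: (rmorph_nilpotent (val : fAJ f J -> B) (rmorph_nilpotent amalg_snd scale_nil)).
apply: nilpotent_amalg; first by exists 1%N; rewrite expr1.
apply: (nilpotent_inj val_inj); apply/(regular_central_nilpotentM (val c) t_reg).
exact: rmorph_nilpotent.
Qed.

End Scale.

Lemma amalg_scaleM (s : B) (sJ : s \in J) (ssJ : s * s \in J) (c c' : fAJ f J) :
  (forall b, s * b = b * s) ->
  amalg_scale sJ c * amalg_scale sJ c' = amalg_scale ssJ (c * c').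
Proof.
move=> sC; apply: val_inj => /=; apply: injective_projections => /=.
  by rewrite mul0r.
by rewrite -mulrA [fAJ_val c * _]mulrA -sC !mulrA.
Qed.

End Amalgamation.

Theorem theorem3p1 (A B : nzRingType) (f : {rmorphism A -> B}) (J : ideal B)
  (J_proper : exists b : B, b \notin J)
  (J_meets_S : exists s : B, s \in J /\ regular_central s) :
  nil_armendariz (amalg f J) <-> nil_armendariz A /\ nil_armendariz (fAJ f J).
Proof.
split=> [amalg_nA | [A_nA fAJ_nA]]; last first.
  exact: nil_armendariz_of_rmorph (@nilpotent_amalg _ _ f J) A_nA fAJ_nA.
split.
  exact: nil_armendariz_retract (@amalg_diagK _ _ f J) amalg_nA.
have [s [sJ s_reg]] := J_meets_S.
have ssJ : s * s \in J by apply: Defs.idealMr.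
have ss_reg := regular_centralM s_reg s_reg.
apply: (nil_armendariz_transfer (g := amalg_scale sJ) (h := amalg_scale ssJ)) => //.
- exact: raddf0.
- by move=> c c'; apply: amalg_scaleM; case: s_reg.
all: by move=> c /(amalg_scale_nilpotent ssJ c ss_reg).
Qed.
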